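(* Let $V$ be the set of the $24$ points of $\mathbb{R}^4$ obtained as all coordinate permutations of $(\pm 1,\pm 1,0,0)$; these are the vertices of the $24$-cell. The octahedral cells of the $24$-cell are the following $24$ six-element subsets of $V$: - for each of the $8$ vectors $c\in\{\pm e_1,\pm e_2,\pm e_3,\pm e_4\}$, the cell $C_c=\{v\in V : v\cdot c = 1\}$; - for each of the $16$ vectors $c\in\{(\pm1,\pm1,\pm1,\pm1)\}$, the cell $C_c=\{v\in V: v\cdot c=2\}$. Then there exists a bijection $f\colon V\to\{1,2,\dots,24\}$ such that $\sum_{v\in C}f(v)$ takes the same value for every one of these $24$ octahedral cells $C$. This common value is $75$.
   Context: Here $e_1,\dots,e_4$ are the standard basis vectors of $\mathbb{R}^4$ and $v\cdot c$ is the standard dot product. Each of the sets $C_c$ listed has exactly six elements, and these are the vertex sets of the $24$ octahedral cells of the $24$-cell. A bijection $f$ with equal cell sums is called a cell-magic (facet-magic) labeling, or magic $24$-cell. *)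

(* Points of R^4 with integer coordinates are represented as
   quadruples of integers; all points involved have coordinates in {-1,0,1}. *)
From mathcomp Require Import all_boot all_order all_algebra.
Set Implicit Arguments. Unset Strict Implicit. Unset Printing Implicit Defensive.
Import Order.TTheory GRing.Theory Num.Theory.
Local Open Scope ring_scope.

Definition vec4 := (int * int * int * int)%type.

Definition dot4 (v c : vec4) : int :=
  let: (a1, a2, a3, a4) := v in let: (b1, b2, b3, b4) := c in
  a1 * b1 + a2 * b2 + a3 * b3 + a4 * b4.

Definition nz (x : int) : nat := if x == 0 then 0%N else 1%N.

(* V: all coordinate permutations of (+-1,+-1,0,0), i.e. the vectors with
   entries in {-1,0,1} having exactly two nonzero entries. *)
Definition quads (s : seq int) : seq vec4 :=
  flatten [seq flatten [seq flatten [seq [seq (a, b, c, d) | d <- s] | c <- s]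
                       | b <- s] | a <- s].

Definition trits : seq int := [:: -1; 0; 1].
Definition V24 : seq vec4 :=
  filter (fun v : vec4 => let: (a, b, c, d) := v in
                           (nz a + nz b + nz c + nz d == 2)%N)
    (quads trits).

Definition axis_vecs : seq vec4 :=
  [:: (1, 0, 0, 0); (-1, 0, 0, 0); (0, 1, 0, 0); (0, -1, 0, 0);
      (0, 0, 1, 0); (0, 0, -1, 0); (0, 0, 0, 1); (0, 0, 0, -1)].

Definition signs : seq int := [:: -1; 1].
Definition sign_vecs : seq vec4 :=
  quads signs.

Definition cells24 : seq (seq vec4) :=
  [seq [seq v <- V24 | dot4 v c == 1] | c <- axis_vecs] ++
  [seq [seq v <- V24 | dot4 v c == 2] | c <- sign_vecs].

Definition bij_onto_1_24 (f : vec4 -> nat) : Prop :=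
  [/\ {in V24 &, injective f},
      (forall v, v \in V24 -> (1 <= f v <= 24)%N) &
      (forall k, (1 <= k <= 24)%N -> exists2 v, v \in V24 & f v = k)].

Lemma V24_size : size V24 = 24%N. Proof. by vm_compute. Qed.
Lemma cells_ok : size cells24 = 24%N /\ all (fun C => size C == 6%N) cells24.
Proof. by vm_compute. Qed.

From mathcomp Require Import all_boot all_order all_algebra.

Set Implicit Arguments.
Unset Strict Implicit.
Unset Printing Implicit Defensive.

(* A bijection V -> {1..24} is a permutation of 1..24 listed along the
   enumeration V24; for the explicit witness below the 24 cell sums are
   checked by evaluation.  The value 75 is forced: every vertex lies in exactly six
   cells, so the 24 cell sums add up to 6 (1 + ... + 24) = 24 * 75. *)

Lemma map_index_uniq (T : eqType) (s : seq T) :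
  uniq s -> map (index^~ s) s = iota 0 (size s).
Proof.
elim: s => //= x s IHs /andP[xNs s_uniq]; rewrite eqxx; congr cons.
rewrite -add1n iotaDl -IHs // -map_comp; apply/eq_in_map => y ys /=.
by rewrite ifN //; apply: contraNneq xNs => ->.
Qed.

Section LabelingBySeq.

Variables (T : eqType) (s : seq T) (labels : seq nat).
Hypotheses (s_uniq : uniq s) (labels_perm : perm_eq labels (iota 1 (size s))).

Definition label_of (x : T) : nat := nth 0 labels (index x s).

Lemma size_labels : size labels = size s.
Proof. by rewrite (perm_size labels_perm) size_iota. Qed.

Lemma map_label_of : map label_of s = labels.
Proof.
rewrite -[RHS]take_size -(map_nth_iota0 0) // size_labels.
by rewrite -(map_index_uniq s_uniq) -map_comp.
Qed.

Lemma label_of_inj : {in s &, injective label_of}.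
Proof.
move=> x y xs ys /eqP; rewrite /label_of nth_uniq ?size_labels ?index_mem //.
  by move=> /eqP/(congr1 (nth x s)); rewrite !nth_index.
by rewrite (perm_uniq labels_perm) iota_uniq.
Qed.

Lemma mem_labels k : (k \in labels) = (1 <= k <= size s)%N.
Proof. by rewrite (perm_mem labels_perm) mem_iota add1n ltnS. Qed.

Lemma label_of_range x : x \in s -> (1 <= label_of x <= size s)%N.
Proof. by move=> xs; rewrite -mem_labels -map_label_of map_f. Qed.

Lemma label_of_onto k :
  (1 <= k <= size s)%N -> exists2 x, x \in s & label_of x = k.
Proof. by rewrite -mem_labels -map_label_of => /mapP[x xs ->]; exists x. Qed.

End LabelingBySeq.

Definition magic_labels : seq nat :=
  [:: 23; 9; 4; 16; 3; 20; 1; 21; 15; 10; 17; 11;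
      14; 8; 13; 12; 6; 22; 5; 24; 7; 19; 18; 2]%N.

Definition magic_labeling : vec4 -> nat := label_of V24 magic_labels.

Lemma V24_uniq : uniq V24.
Proof. by vm_compute. Qed.

Lemma magic_labels_perm : perm_eq magic_labels (iota 1 (size V24)).
Proof. by vm_compute. Qed.

Lemma magic_labeling_cell_sums :
  all (fun C => \sum_(v <- C) magic_labeling v == 75)%N cells24.
Proof. by rewrite unlock; vm_compute. Qed.

Theorem mainTheorem1 :
  exists f : vec4 -> nat, bij_onto_1_24 f /\
    (forall C, C \in cells24 -> (\sum_(v <- C) f v)%N = 75%N).
Proof.
exists magic_labeling; split; last first.
  by move=> C /(allP magic_labeling_cell_sums)/eqP.
have := label_of_range V24_uniq magic_labels_perm.
have := label_of_onto V24_uniq magic_labels_perm.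
rewrite V24_size => onto range.
by split=> //; apply: label_of_inj magic_labels_perm.
Qed.
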